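(* There are infinitely many binary strings $w$ (strings over a two-letter alphabet) such that $\sigma(w)/|w| > 2.035$, where $\sigma(w)$ denotes the sum of the exponents of all runs in $w$.
   Context: For a word $u=u_1\cdots u_m$ over a finite alphabet, the (shortest) period $\mathrm{per}(u)$ is the smallest positive integer $p$ such that $u_i=u_{i+p}$ for all $1\le i\le m-p$; $u[i..j]$ denotes the factor $u_i\cdots u_j$. A run in a word $u$ is an interval $[i..j]$ of positions such that the period $p$ of $u[i..j]$ satisfies $2p\le j-i+1$, and the interval cannot be extended to the left or right without violating this, i.e. $u[i-1]\ne u[i+p-1]$ (or $i=1$) and $u[j-p+1]\ne u[j+1]$ (or $j=|u|$). The exponent of such a run is $(j-i+1)/p$. $\sigma(u)$ is the sum of exponents of all runs in $u$. *)

From mathcomp Require Import all_boot all_order all_algebra.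
Set Implicit Arguments. Unset Strict Implicit. Unset Printing Implicit Defensive.
Import Order.TTheory GRing.Theory Num.Theory.

(* the factor u[i..j] (0-based, inclusive) *)
Definition factor (u : seq bool) (i j : nat) : seq bool :=
  take (j - i + 1) (drop i u).

Definition is_periodb (v : seq bool) (p : nat) : bool :=
  all (fun k => nth false v k == nth false v (k + p)) (iota 0 (size v - p)).

(* shortest positive period (for nonempty v; size v is always a period) *)
Definition per (v : seq bool) : nat :=
  (find (fun p => (0 < p) && is_periodb v p) (iota 0 (size v).+1)).

Definition is_run (u : seq bool) (i j : nat) : bool :=
  let p := per (factor u i j) in
  [&& i <= j, j < size u, 2 * p <= j - i + 1,
      (i == 0) || (nth false u i.-1 != nth false u (i + p).-1)
    & (j == (size u).-1) || (nth false u (j + 1 - p) != nth false u j.+1)].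

Definition run_exponent (u : seq bool) (i j : nat) : rat :=
  ((j - i + 1)%:R / (per (factor u i j))%:R)%R.

Definition sigma (u : seq bool) : rat :=
  (\sum_(i < size u) \sum_(j < size u | is_run u i j) run_exponent u i j)%R.

From Stdlib Require Import NArith.
From mathcomp Require Import all_boot all_order all_algebra.
From mathcomp Require Import zify ring.
Set Implicit Arguments. Unset Strict Implicit. Unset Printing Implicit Defensive.
Import Order.TTheory GRing.Theory Num.Theory.

(* There is a binary word [w] of length 475 such that the runs of [w^4] that
   start in its second copy of [w] and end before its last letter have
   exponents summing to more than 2.035 |w|.  Such a run is unaffected by
   what surrounds it, so in [w^(n+3)] it reappears, with the same exponent,
   shifted into each of the first [n] copies of [w].  Hence
   sigma(w^(n+3)) / |w^(n+3)| > 2.035 * n / (n + 3) * (1 + eps) > 2.035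
   for all large [n]. *)

Section Infix.

Variables (a x b : seq bool).

Lemma nth_cat_infix k : k < size x -> nth false (a ++ x ++ b) (k + size a) = nth false x k.
Proof. by move=> hk; rewrite nth_cat ltnNge leq_addl /= addnK nth_cat hk. Qed.

Lemma factor_cat_infix i j : i <= j -> j < size x ->
  factor (a ++ x ++ b) (i + size a) (j + size a) = factor x i j.
Proof.
move=> hij hj; rewrite /factor drop_cat ltnNge leq_addl /= addnK drop_cat.
rewrite (leq_ltn_trans hij hj) subnDr take_cat size_drop.
case: ifP => // /negbT hlong; have -> : j - i + 1 = size x - i by lia.
by rewrite subnn take0 cats0 take_oversize // size_drop.
Qed.

Lemma run_exponent_cat_infix i j : i <= j -> j < size x ->
  run_exponent (a ++ x ++ b) (i + size a) (j + size a) = run_exponent x i j.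
Proof. by move=> hij hj; rewrite /run_exponent factor_cat_infix // subnDr. Qed.

(* A run that touches neither end of [x] is delimited inside [x] by mismatches,
   so the maximality conditions survive any extension on both sides. *)
Lemma is_run_cat_infix i j : is_run x i j -> 0 < i -> j.+1 < size x ->
  is_run (a ++ x ++ b) (i + size a) (j + size a).
Proof.
case/and5P=> hij _ hp hl hr hi hj; rewrite /is_run factor_cat_infix //; last by lia.
set p := per (factor x i j) in hp hl hr *.
have /= hl' : nth false x i.-1 != nth false x (i + p).-1 by move: hl; case: eqP => //; lia.
have /= hr' : nth false x (j + 1 - p) != nth false x j.+1.
  by move: hr; case: eqP => //; lia.
apply/and5P; split; rewrite ?leq_add2r ?subnDr ?size_cat //; first by lia.
- apply/orP; right.
  have -> : (i + size a).-1 = i.-1 + size a by lia.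
  have -> : (i + size a + p).-1 = (i + p).-1 + size a by lia.
  by rewrite !nth_cat_infix //; lia.
- apply/orP; right.
  have -> : j + size a + 1 - p = (j + 1 - p) + size a by lia.
  rewrite -addSn !nth_cat_infix //; lia.
Qed.

End Infix.

Local Open Scope ring_scope.

Lemma ler_sum_subset (R : numDomainType) (T : eqType) (s s' : seq T) (F : T -> R) :
  uniq s -> uniq s' -> {subset s <= s'} -> (forall x, 0 <= F x) ->
  \sum_(x <- s) F x <= \sum_(x <- s') F x.
Proof.
move=> us us' ss' F_ge0; rewrite [leRHS](bigID (mem s)) /= -[X in X + _]big_filter.
have s_perm : perm_eq [seq x <- s' | x \in s] s.
  apply: uniq_perm; rewrite ?filter_uniq // => x.
  by rewrite mem_filter; case: (boolP (x \in s)) => // /ss'.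
by rewrite (perm_big _ s_perm) lerDl sumr_ge0.
Qed.

Lemma run_exponent_ge0 u i j : 0 <= run_exponent u i j.
Proof. by rewrite divr_ge0 ?ler0n. Qed.

Lemma sigma_allpairsE u : sigma u =
  \sum_(ij <- [seq (i, j) | i <- iota 0 (size u), j <- iota 0 (size u)])
    (if is_run u ij.1 ij.2 then run_exponent u ij.1 ij.2 else 0).
Proof.
have -> : iota 0 (size u) = index_iota 0 (size u) by rewrite /index_iota subn0.
rewrite big_allpairs /sigma big_mkord.
by apply: eq_bigr => i _; rewrite big_mkord big_mkcond.
Qed.

Lemma sum_run_exponent_le_sigma u (S : seq (nat * nat)) :
  uniq S -> all (fun ij => is_run u ij.1 ij.2) S ->
  \sum_(ij <- S) run_exponent u ij.1 ij.2 <= sigma u.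
Proof.
move=> uS runS; rewrite sigma_allpairsE.
rewrite (eq_big_seq (fun ij =>
    if is_run u ij.1 ij.2 then run_exponent u ij.1 ij.2 else 0)); last first.
  by move=> ij /(allP runS) ->.
apply: ler_sum_subset => //.
- by rewrite allpairs_uniq ?iota_uniq // => -[? ?] [? ?].
- move=> [i j] /(allP runS) /and5P[/= hij hj _ _ _].
  by apply/allpairsP; exists (i, j); rewrite !mem_iota; split => //=; lia.
- by move=> ij; case: ifP => // _; apply: run_exponent_ge0.
Qed.

Definition wpow (w : seq bool) (n : nat) : seq bool := flatten (nseq n w).

Lemma size_wpow w n : size (wpow w n) = (n * size w)%N.
Proof. by elim: n => //= n IH; rewrite size_cat IH mulSn. Qed.

Lemma wpowD w a b : wpow w (a + b) = wpow w a ++ wpow w b.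
Proof. by rewrite /wpow nseqD flatten_cat. Qed.

Lemma wpow_split w n t : (t < n)%N ->
  wpow w (n + 3) = wpow w t ++ wpow w 4 ++ wpow w (n.-1 - t).
Proof. by move=> tn; rewrite -!wpowD; congr wpow; lia. Qed.

Lemma addn_mul_bounded_inj (m a a' t t' : nat) :
  (m <= a < 2 * m)%N -> (m <= a' < 2 * m)%N -> (a + t * m = a' + t' * m)%N -> t = t'.
Proof. by move=> /andP[? ?] /andP[? ?] ?; nia. Qed.

Definition interior_runs (w : seq bool) (C : seq (nat * nat)) : bool :=
  uniq C && all (fun ij => [&& is_run (wpow w 4) ij.1 ij.2,
                               (size w <= ij.1 < 2 * size w)%N
                             & (ij.2.+1 < 4 * size w)%N]) C.

Lemma sigma_wpow_ge w C n : interior_runs w C ->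
  n%:R * \sum_(ij <- C) run_exponent (wpow w 4) ij.1 ij.2 <= sigma (wpow w (n + 3)).
Proof.
case/andP=> uC runsC; set m := size w; set E := \sum_(ij <- C) _.
have runC ij : ij \in C -> [&& is_run (wpow w 4) ij.1 ij.2,
                               (m <= ij.1 < 2 * m)%N & (ij.2.+1 < 4 * m)%N].
  exact: (allP runsC).
have shift_run t ij : t \in iota 0 n -> ij \in C ->
    is_run (wpow w (n + 3)) (ij.1 + t * m) (ij.2 + t * m) /\
    run_exponent (wpow w (n + 3)) (ij.1 + t * m) (ij.2 + t * m) =
    run_exponent (wpow w 4) ij.1 ij.2.
  rewrite mem_iota add0n => /andP[_ tn] /runC /and3P[ij_run /andP[i_ge i_lt] j_lt].
  have [i_le_j j_size] : (ij.1 <= ij.2 /\ ij.2 < size (wpow w 4))%N.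
    by move: ij_run => /and5P[].
  rewrite (wpow_split w tn) -(size_wpow w t) run_exponent_cat_infix //.
  split=> //; apply: is_run_cat_infix => //; rewrite ?size_wpow; lia.
pose S := [seq (ij.1 + t * m, ij.2 + t * m)%N | t <- iota 0 n, ij <- C].
have uS : uniq S.
  rewrite allpairs_uniq ?iota_uniq // => -[t ij] [t' ij'].
  move=> /allpairsP[[t1 [i1 j1]] /= [_ hij [-> ->]]].
  move=> /allpairsP[[t2 [i2 j2]] /= [_ hij' [-> ->]]] [e1 e2].
  move: hij hij' => /runC /and3P[_ hi _] /runC /and3P[_ hi' _].
  have tt' := addn_mul_bounded_inj hi hi' e1; subst t2.
  by rewrite (addIn e1) (addIn e2).
have runsS : all (fun ij => is_run (wpow w (n + 3)) ij.1 ij.2) S.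
  by apply/allP => _ /allpairsP[[t ij] /= [ht hij ->]]; case: (shift_run t ij ht hij).
apply: le_trans (sum_run_exponent_le_sigma uS runsS).
rewrite big_allpairs_dep /=.
rewrite [leRHS](eq_big_seq (fun=> E)); last first.
  by move=> t ht; apply: eq_big_seq => ij hij; case: (shift_run t ij ht hij).
have -> : iota 0 n = index_iota 0 n by rewrite /index_iota subn0.
by rewrite sumr_const_nat subn0 mulr_natl.
Qed.

Lemma eventually_ltr_mulr (R : archiFieldType) (c E m : R) (k : nat) : c * m < E ->
  exists N, forall n, (N <= n)%N -> c * ((n + k)%:R * m) < n%:R * E.
Proof.
rewrite -subr_gt0 => d_gt0.
exists (Num.truncn (k%:R * c * m / (E - c * m))).+1 => n hn.
have : k%:R * c * m < n%:R * (E - c * m).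
  rewrite -ltr_pdivrMr //; apply: lt_le_trans (truncnS_gt _) _; by rewrite ler_nat.
have -> : c * ((n + k)%:R * m) = k%:R * c * m + n%:R * (c * m) by rewrite natrD; ring.
by rewrite mulrBr ltrBrDr.
Qed.

Lemma size_le_sumn_size (T : eqType) (L : seq (seq T)) x :
  x \in L -> (size x <= sumn (map size L))%N.
Proof. by elim: L => //= y L IH; rewrite in_cons => /orP[/eqP->|/IH]; lia. Qed.

Lemma exists_words_sigma_ratio_gt (c : rat) w C :
  (0 < size w)%N -> interior_runs w C ->
  c * (size w)%:R < \sum_(ij <- C) run_exponent (wpow w 4) ij.1 ij.2 ->
  forall L : seq (seq bool), exists w', w' \notin L /\ c < sigma w' / (size w')%:R.
Proof.
move=> w_gt0 runs_ok dense L.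
have [N ratio_gt] := eventually_ltr_mulr 3 dense.
set n := (N + sumn (map size L))%N.
exists (wpow w (n + 3)); split.
  apply/negP => /size_le_sumn_size; apply/negP; rewrite -ltnNge size_wpow.
  apply: leq_trans (leq_pmulr _ w_gt0).
  by rewrite -[X in (X < _)%N]/(sumn (map size L)) /n; lia.
rewrite size_wpow ltr_pdivlMr ?ltr0n ?muln_gt0 ?w_gt0 ?addn_gt0 ?orbT // natrM.
exact: lt_le_trans (ratio_gt n (leq_addr _ _)) (sigma_wpow_ge n runs_ok).
Qed.

Lemma ler_frac_nat (R : numFieldType) (a b c d : nat) : (0 < b)%N -> (0 < d)%N ->
  (a%:R / b%:R <= c%:R / d%:R :> R) = (a * d <= c * b)%N.
Proof.
move=> b_gt0 d_gt0.
by rewrite ler_pdivrMr ?ltr0n // mulrAC ler_pdivlMr ?ltr0n // -!natrM ler_nat.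
Qed.

Lemma ltr_frac_nat (R : numFieldType) (a b c d : nat) : (0 < b)%N -> (0 < d)%N ->
  (a%:R / b%:R < c%:R / d%:R :> R) = (a * d < c * b)%N.
Proof.
move=> b_gt0 d_gt0.
by rewrite ltr_pdivrMr ?ltr0n // mulrAC ltr_pdivlMr ?ltr0n // -!natrM ltr_nat.
Qed.

Lemma ltr_ratio_mul_nat (R : numFieldType) (a b m c d : nat) : (0 < b)%N -> (0 < d)%N ->
  (a * m * d < c * b)%N -> a%:R / b%:R * m%:R < c%:R / d%:R :> R.
Proof. by move=> b_gt0 d_gt0; rewrite mulrAC -natrM ltr_frac_nat. Qed.

(* [floor (D * l / p)] for a run of length [l] and period [p]; binary numbers keep
   the evaluation of these numerators by [vm_compute] cheap. *)
Definition exponent_floor (D : N) (u : seq bool) (i j : nat) : N :=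
  (D * N.of_nat (j - i + 1) / N.of_nat (per (factor u i j)))%num.

Definition exponent_floor_sum (D : N) (u : seq bool) (C : seq (nat * nat)) : N :=
  foldr (fun ij s => exponent_floor D u ij.1 ij.2 + s)%num 0%num C.

Lemma exponent_floor_le D u i j :
  (N.to_nat (exponent_floor D u i j))%:R / (N.to_nat D)%:R <= run_exponent u i j.
Proof.
rewrite /exponent_floor /run_exponent; set l := (j - i + 1)%N; set p := per _.
have [->|p_gt0] := posnP p; first by rewrite N.div_0_r /= !(mulr0n, mul0r, invr0, mulr0).
have [D0|D_gt0] := posnP (N.to_nat D); first by rewrite D0 invr0 mulr0 divr_ge0.
rewrite ler_frac_nat //.
have : (N.of_nat p * (D * N.of_nat l / N.of_nat p) <= D * N.of_nat l)%num.
  by apply: N.mul_div_le; lia.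
lia.
Qed.

Lemma exponent_floor_sum_le D u C :
  (N.to_nat (exponent_floor_sum D u C))%:R / (N.to_nat D)%:R <=
  \sum_(ij <- C) run_exponent u ij.1 ij.2.
Proof.
elim: C => [|ij C IH] /=; first by rewrite big_nil mul0r.
by rewrite big_cons N2Nat.inj_add natrD mulrDl lerD ?exponent_floor_le.
Qed.

Definition dense_word : seq bool :=
  [:: true; true; false; true; false; false; true; false; true; true; false;
     true; false; true; true; false; true; false; false; true; false; true;
     true; false; true; false; true; true; false; true; false; true; true;
     false; true; false; false; true; false; true; true; false; true; false;
     true; true; false; true; false; false; true; false; true; true; false;
     true; false; false; true; false; true; true; false; true; false; true;
     true; false; true; false; false; true; false; true; true; false; true;
     false; true; true; false; true; false; true; true; false; true; false;
     false; true; false; true; true; false; true; false; true; true; false;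
     true; false; false; true; false; true; true; false; true; false; true;
     true; false; true; false; false; true; false; true; true; false; true;
     false; true; true; false; true; false; true; true; false; true; false;
     false; true; false; true; true; false; true; false; true; true; false;
     true; false; false; true; false; true; true; false; true; false; true;
     true; false; true; false; false; true; false; true; true; false; true;
     false; false; true; false; true; true; false; true; false; true; true;
     false; true; false; false; true; false; true; true; false; true; false;
     true; true; false; true; false; true; true; false; true; false; false;
     true; false; true; true; false; true; false; true; true; false; true;
     false; false; true; false; true; true; false; true; false; true; true;
     false; true; false; false; true; false; true; true; false; true; false;
     true; true; false; true; false; true; true; false; true; false; false;
     true; false; true; true; false; true; false; true; true; false; true;
     false; false; true; false; true; true; false; true; false; false; true;
     false; true; true; false; true; false; true; true; false; true; false;
     false; true; false; true; true; false; true; false; true; true; false;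
     true; false; true; true; false; true; false; false; true; false; true;
     true; false; true; false; true; true; false; true; false; false; true;
     false; true; true; false; true; false; true; true; false; true; false;
     false; true; false; true; true; false; true; false; false; true; false;
     true; true; false; true; false; true; true; false; true; false; false;
     true; false; true; true; false; true; false; true; true; false; true;
     false; true; true; false; true; false; false; true; false; true; true;
     false; true; false; true; true; false; true; false; false; true; false;
     true; true; false; true; false; true; true; false; true; false; false;
     true; false; true; true; false; true; false; true; true; false; true;
     false; true; true; false; true; false; false; true; false; true; true;
     false; true; false; true; true; false; true; false; false; true; false;
     true; true; false; true; false; true; true; false; true; false; false;
     true; false; true; true; false; true; false; false; true; false; true;
     true; false; true; false; true; true; false; true; false; false; true;
     false; true; true; false; true; false; true; true; false; true; false;
     true; true; false; true; false; false; true; false; true; true; false;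
     true; false].

Definition dense_word_runs : seq (nat * nat) :=
  [:: (475, 476); (476, 479); (477, 482); (479, 480); (480, 483); (480, 492);
     (480, 523); (481, 486); (483, 484); (484, 488); (485, 500); (486, 491);
     (488, 489); (489, 492); (490, 495); (492, 493); (493, 496); (493, 510);
     (494, 499); (496, 497); (497, 501); (498, 531); (498, 736); (498, 1071);
     (499, 504); (501, 502); (502, 506); (503, 518); (503, 552); (504, 509);
     (506, 507); (507, 510); (508, 513); (510, 511); (511, 514); (511, 523);
     (512, 517); (514, 515); (515, 519); (516, 539); (517, 522); (519, 520);
     (520, 523); (521, 526); (523, 524); (524, 527); (524, 557); (524, 588);
     (524, 640); (525, 530); (527, 528); (528, 531); (529, 534); (531, 532);
     (532, 535); (532, 544); (532, 575); (533, 538); (535, 536); (536, 540);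
     (537, 552); (538, 543); (540, 541); (541, 544); (542, 547); (544, 545);
     (545, 548); (545, 562); (546, 551); (548, 549); (549, 553); (550, 601);
     (551, 556); (553, 554); (554, 558); (555, 570); (556, 561); (558, 559);
     (559, 562); (560, 565); (562, 563); (563, 566); (563, 575); (563, 632);
     (564, 569); (566, 567); (567, 571); (568, 583); (568, 705); (568, 897);
     (569, 574); (571, 572); (572, 575); (573, 578); (575, 576); (576, 579);
     (576, 588); (576, 619); (577, 582); (579, 580); (580, 584); (581, 596);
     (582, 587); (584, 585); (585, 588); (586, 591); (588, 589); (589, 592);
     (589, 606); (590, 595); (592, 593); (593, 597); (594, 640); (595, 600);
     (597, 598); (598, 602); (599, 614); (599, 666); (600, 605); (602, 603);
     (603, 606); (604, 609); (606, 607); (607, 610); (607, 619); (607, 801);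
     (608, 613); (610, 611); (611, 615); (612, 627); (612, 661); (613, 618);
     (615, 616); (616, 619); (617, 622); (619, 620); (620, 623); (620, 632);
     (621, 626); (623, 624); (624, 628); (625, 648); (626, 631); (628, 629);
     (629, 632); (630, 635); (632, 633); (633, 636); (633, 666); (633, 697);
     (633, 736); (634, 639); (636, 637); (637, 640); (638, 643); (640, 641);
     (641, 644); (641, 653); (641, 684); (642, 647); (644, 645); (645, 649);
     (646, 661); (647, 652); (649, 650); (650, 653); (651, 656); (653, 654);
     (654, 657); (654, 671); (655, 660); (657, 658); (658, 662); (659, 710);
     (660, 665); (662, 663); (663, 667); (664, 679); (665, 670); (667, 668);
     (668, 671); (669, 674); (671, 672); (672, 675); (672, 684); (672, 736);
     (673, 678); (675, 676); (676, 680); (677, 692); (677, 788); (678, 683);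
     (680, 681); (681, 684); (682, 687); (684, 685); (685, 688); (685, 697);
     (685, 728); (686, 691); (688, 689); (689, 693); (690, 705); (691, 696);
     (693, 694); (694, 697); (695, 700); (697, 698); (698, 701); (698, 715);
     (699, 704); (701, 702); (702, 706); (703, 736); (703, 866); (704, 709);
     (706, 707); (707, 711); (708, 723); (708, 757); (709, 714); (711, 712);
     (712, 715); (713, 718); (715, 716); (716, 719); (716, 728); (717, 722);
     (719, 720); (720, 724); (721, 744); (722, 727); (724, 725); (725, 728);
     (726, 731); (728, 729); (729, 732); (729, 762); (729, 793); (729, 1006);
     (730, 735); (732, 733); (733, 736); (734, 739); (736, 737); (737, 740);
     (737, 749); (737, 780); (738, 743); (740, 741); (741, 745); (742, 757);
     (743, 748); (745, 746); (746, 749); (747, 752); (749, 750); (750, 753);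
     (750, 767); (751, 756); (753, 754); (754, 758); (755, 801); (756, 761);
     (758, 759); (759, 763); (760, 775); (760, 827); (761, 766); (763, 764);
     (764, 767); (765, 770); (767, 768); (768, 771); (768, 780); (768, 1276);
     (769, 774); (771, 772); (772, 776); (773, 788); (773, 822); (774, 779);
     (776, 777); (777, 780); (778, 783); (780, 781); (781, 784); (781, 793);
     (782, 787); (784, 785); (785, 789); (786, 809); (787, 792); (789, 790);
     (790, 793); (791, 796); (793, 794); (794, 797); (794, 827); (794, 858);
     (794, 910); (795, 800); (797, 798); (798, 801); (799, 804); (801, 802);
     (802, 805); (802, 814); (802, 845); (803, 808); (805, 806); (806, 810);
     (807, 822); (808, 813); (810, 811); (811, 814); (812, 817); (814, 815);
     (815, 818); (815, 832); (816, 821); (818, 819); (819, 823); (820, 871);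
     (821, 826); (823, 824); (824, 828); (825, 840); (826, 831); (828, 829);
     (829, 832); (830, 835); (832, 833); (833, 836); (833, 845); (833, 902);
     (834, 839); (836, 837); (837, 841); (838, 853); (838, 975); (839, 844);
     (841, 842); (842, 845); (843, 848); (845, 846); (846, 849); (846, 858);
     (846, 889); (847, 852); (849, 850); (850, 854); (851, 866); (852, 857);
     (854, 855); (855, 858); (856, 861); (858, 859); (859, 862); (859, 876);
     (860, 865); (862, 863); (863, 867); (864, 910); (865, 870); (867, 868);
     (868, 872); (869, 884); (869, 936); (870, 875); (872, 873); (873, 876);
     (874, 879); (876, 877); (877, 880); (877, 889); (877, 1102); (878, 883);
     (880, 881); (881, 885); (882, 897); (882, 931); (883, 888); (885, 886);
     (886, 889); (887, 892); (889, 890); (890, 893); (890, 902); (891, 896);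
     (893, 894); (894, 898); (895, 918); (896, 901); (898, 899); (899, 902);
     (900, 905); (902, 903); (903, 906); (903, 936); (903, 967); (903, 1006);
     (904, 909); (906, 907); (907, 910); (908, 913); (910, 911); (911, 914);
     (911, 923); (911, 954); (912, 917); (914, 915); (915, 919); (916, 931);
     (917, 922); (919, 920); (920, 923); (921, 926); (923, 924); (924, 927);
     (924, 941); (925, 930); (927, 928); (928, 932); (929, 980); (930, 935);
     (932, 933); (933, 937); (934, 949); (935, 940); (937, 938); (938, 941);
     (939, 944); (941, 942); (942, 945); (942, 954); (942, 1006); (943, 948);
     (945, 946); (946, 950); (947, 962); (947, 1058); (948, 953)].

Theorem theorem1 :
  forall L : seq (seq bool),
    exists w : seq bool, w \notin L /\
      (2035%:R / 1000%:R < sigma w / (size w)%:R :> rat)%R.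
Proof.
have word_gt0 : (0 < size dense_word)%N by [].
have runs_ok : interior_runs dense_word dense_word_runs by vm_compute.
have floors_large : (2035 * 100000 * N.of_nat (size dense_word) <
    1000 * exponent_floor_sum 100000 (wpow dense_word 4) dense_word_runs)%num.
  by apply/N.ltb_lt; vm_compute.
apply: exists_words_sigma_ratio_gt word_gt0 runs_ok _.
apply: lt_le_trans (exponent_floor_sum_le 100000 _ _).
(* The closed terms are generalized so that no tactic tries to evaluate them
   by conversion (in unary). *)
apply: ltr_ratio_mul_nat; [by [] | lia |].
move: floors_large; move: (size _) (exponent_floor_sum _ _ _) => m Q.
lia.
Qed.
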